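(* Let $G$ be a $k$-chromatic graph and $\{u,v\}$ an implicit-edge (respectively implicit-identity) of $G$. Let $0\le \ell\le k-2$ and let $S_1,\dots,S_\ell$ be vertex sets not containing $u$ or $v$ such that, for each $i$, $S_i$ is a critical independent set of $G-(S_1\cup\dots\cup S_{i-1})$. Then $\{u,v\}$ is an implicit-edge (respectively implicit-identity) of $H=G-(S_1\cup\dots\cup S_\ell)$, with respect to $\chi(H)=k-\ell$.
   Context: All graphs are finite, simple and connected. For a graph $G$ and vertices $u,v$, $G-uv$ denotes $G$ with the edge $uv$ removed if $uv\in E(G)$ (and $G$ itself otherwise). A $k$-coloring is a proper vertex coloring with colors from $\{1,\dots,k\}$. Given a $k$-chromatic graph $G$, a pair of distinct vertices $\{u,v\}$ is an implicit-edge of $G$ iff there is no $k$-coloring $c$ of $G-uv$ with $c(u)=c(v)$, and an implicit-identity of $G$ iff there is no $k$-coloring $c$ of $G-uv$ with $c(u)\neq c(v)$. An independent set $S$ of a $k$-chromatic graph $G$ is critical iff $\chi(G-S)=k-1$. *)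

From mathcomp Require Import all_boot.
Set Implicit Arguments. Unset Strict Implicit. Unset Printing Implicit Defensive.

(* A graph is a vertex set V : {set T} over a finite type T together with an
   adjacency relation e : rel T; only edges between vertices of V count
   (so deleting vertices = shrinking V, i.e. taking the induced subgraph). *)

Definition simple_rel (T : finType) (e : rel T) : Prop :=
  symmetric e /\ irreflexive e.

Definition connected_graph (T : finType) (V : {set T}) (e : rel T) : Prop :=
  forall x y, x \in V -> y \in V ->
    connect [rel a b | [&& a \in V, b \in V & e a b]] x y.

Definition del_edge (T : finType) (e : rel T) (u v : T) : rel T :=
  [rel x y | e x y && ~~ (((x == u) && (y == v)) || ((x == v) && (y == u)))].

Definition is_coloring (T : finType) (V : {set T}) (e : rel T) (k : nat)
    (c : T -> 'I_k) : Prop :=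
  forall x y, x \in V -> y \in V -> e x y -> c x != c y.

Definition colorable (T : finType) (V : {set T}) (e : rel T) (k : nat) : Prop :=
  exists c : T -> 'I_k, is_coloring V e c.

Definition chromatic (T : finType) (V : {set T}) (e : rel T) (k : nat) : Prop :=
  colorable V e k /\ forall j, j < k -> ~ colorable V e j.

Definition independent (T : finType) (V : {set T}) (e : rel T) (S : {set T}) : Prop :=
  S \subset V /\ forall x y, x \in S -> y \in S -> ~~ e x y.

Definition critical_indep (T : finType) (V : {set T}) (e : rel T) (S : {set T}) : Prop :=
  independent V e S /\
  exists k, 0 < k /\ chromatic V e k /\ chromatic (V :\: S) e k.-1.

Definition implicit_edge (T : finType) (V : {set T}) (e : rel T) (k : nat) (u v : T) : Prop :=
  [/\ u \in V, v \in V, u != v &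
   ~ exists c : T -> 'I_k, is_coloring V (del_edge e u v) c /\ c u = c v].

Definition implicit_identity (T : finType) (V : {set T}) (e : rel T) (k : nat) (u v : T) : Prop :=
  [/\ u \in V, v \in V, u != v &
   ~ exists c : T -> 'I_k, is_coloring V (del_edge e u v) c /\ c u != c v].

(* S_1 ∪ ... ∪ S_i, with the sets indexed from 0: \bigcup_(j < i) S j *)
Definition prefix_union (T : finType) (S : nat -> {set T}) (i : nat) : {set T} :=
  \bigcup_(j < i) S j.

From mathcomp Require Import all_boot.
Set Implicit Arguments. Unset Strict Implicit. Unset Printing Implicit Defensive.

(* Removing the critical independent sets one at a time lowers the chromatic
   number by exactly one each time, so H = G - (S_1 u ... u S_l) is
   (k - l)-chromatic. Conversely, a (k - l)-colouring of H - uv extends to a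
   k-colouring of G - uv by giving each S_i its own fresh colour; since u and v
   lie outside every S_i, their colours (equal or distinct) are unchanged. So a
   colouring of H - uv violating the implicit-edge (resp. implicit-identity)
   property of {u, v} in H would give one violating it in G. *)

Lemma chromatic_unique (T : finType) (V : {set T}) (e : rel T) (a b : nat) :
  chromatic V e a -> chromatic V e b -> a = b.
Proof.
move=> [colA minA] [colB minB]; case: (ltngtP a b) => // [ltab|ltba].
- by case: (minB _ ltab colA).
- by case: (minA _ ltba colB).
Qed.

Lemma prefix_unionS (T : finType) (S : nat -> {set T}) (i : nat) :
  prefix_union S i.+1 = prefix_union S i :|: S i.
Proof. by rewrite /prefix_union big_ord_recr. Qed.

Lemma chromatic_prefix_removed (T : finType) (V : {set T}) (e : rel T)
    (S : nat -> {set T}) (k l : nat) :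
  chromatic V e k ->
  (forall i, i < l -> critical_indep (V :\: prefix_union S i) e (S i)) ->
  chromatic (V :\: prefix_union S l) e (k - l).
Proof.
move=> chiV; elim: l => [|l IHl] crit.
  by rewrite subn0 /prefix_union big_ord0 setD0.
have chi_l := IHl (fun i lt_il => crit i (leqW lt_il)).
have [_ [k' [_ [chi_k' chi_del]]]] := crit l (ltnSn l).
by rewrite (chromatic_unique chi_k' chi_l) in chi_del; rewrite prefix_unionS -setDDl subnS.
Qed.

Section ExtendColoring.

Variables (T : finType) (S : nat -> {set T}) (l m : nat).

Definition extend_coloring (c : T -> 'I_m) (x : T) : 'I_(m + l) :=
  if [pick i : 'I_l | x \in S i] is Some i then rshift m i else lshift l (c x).

Lemma extend_coloring_lshift (c : T -> 'I_m) (x : T) :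
  x \notin prefix_union S l -> extend_coloring c x = lshift l (c x).
Proof.
move=> xS; rewrite /extend_coloring; case: pickP => // i xSi.
by case/negP: xS; apply/bigcupP; exists i.
Qed.

Lemma is_coloring_extend (V : {set T}) (e : rel T) (c : T -> 'I_m) :
  (forall i, i < l -> {in S i &, forall x y, ~~ e x y}) ->
  is_coloring (V :\: prefix_union S l) e c ->
  is_coloring V e (extend_coloring c).
Proof.
move=> indS colc x y xV yV exy; rewrite /extend_coloring.
case: pickP => [i xSi|xS]; case: pickP => [j ySj|yS].
- rewrite eq_shift; apply: contraTneq exy => eq_ij.
  by rewrite -eq_ij in ySj; exact: indS i (ltn_ord i) x y xSi ySj.
- by rewrite eq_rlshift.
- by rewrite eq_lrshift.
- have outside z : z \in V -> (forall i : 'I_l, z \in S i = false) ->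
      z \in V :\: prefix_union S l.
    by move=> zV zS; rewrite inE zV andbT; apply/bigcupP => -[i _]; rewrite zS.
  by rewrite eq_shift; apply: colc exy; apply: outside.
Qed.

End ExtendColoring.

Lemma lift_coloring (T : finType) (V : {set T}) (e : rel T)
    (S : nat -> {set T}) (k l : nat) (c : T -> 'I_(k - l)) :
  l <= k ->
  (forall i, i < l -> {in S i &, forall x y, ~~ e x y}) ->
  is_coloring (V :\: prefix_union S l) e c ->
  exists c' : T -> 'I_k, is_coloring V e c' /\
    forall x y, x \notin prefix_union S l -> y \notin prefix_union S l ->
      (c' x == c' y) = (c x == c y).
Proof.
move=> le_lk indS colc; exists (cast_ord (subnK le_lk) \o extend_coloring S l c).
split=> [x y xV yV exy | x y xS yS] /=; rewrite (inj_eq (@cast_ord_inj _ _ _)).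
- exact: is_coloring_extend indS colc x y xV yV exy.
- by rewrite !extend_coloring_lshift // eq_shift.
Qed.

Lemma del_edge_subrel (T : finType) (e : rel T) (u v : T) :
  subrel (del_edge e u v) e.
Proof. by move=> x y /andP[]. Qed.

Theorem theorem3 (T : finType) (V : {set T}) (e : rel T) (k l : nat)
  (u v : T) (S : nat -> {set T}) :
  simple_rel e ->
  connected_graph V e ->
  chromatic V e k ->
  l + 2 <= k ->
  (forall i, i < l -> (u \notin S i) && (v \notin S i)) ->
  (forall i, i < l -> critical_indep (V :\: prefix_union S i) e (S i)) ->
  (implicit_edge V e k u v ->
     chromatic (V :\: prefix_union S l) e (k - l) /\
     implicit_edge (V :\: prefix_union S l) e (k - l) u v) /\
  (implicit_identity V e k u v ->
     chromatic (V :\: prefix_union S l) e (k - l) /\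
     implicit_identity (V :\: prefix_union S l) e (k - l) u v).
Proof.
move=> _ _ chiV le_l2k uvS crit.
have le_lk : l <= k by apply: leq_trans le_l2k; rewrite leq_addr.
have chiH := chromatic_prefix_removed chiV crit.
have indS i : i < l -> {in S i &, forall x y, ~~ del_edge e u v x y}.
  move=> /crit[[_ indSi] _] x y xS yS.
  exact: contra (@del_edge_subrel _ e u v x y) (indSi x y xS yS).
have [uS vS] : u \notin prefix_union S l /\ v \notin prefix_union S l.
  by split; apply/bigcupP => -[i _]; case/andP: (uvS i (ltn_ord i)) => /negP ? /negP.
have lift (c : T -> 'I_(k - l)) : is_coloring (V :\: prefix_union S l) (del_edge e u v) c ->
    exists c' : T -> 'I_k,
      is_coloring V (del_edge e u v) c' /\ (c' u == c' v) = (c u == c v).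
  move=> colc; have [c' [colc' eq_c']] := lift_coloring le_lk indS colc.
  by exists c'; rewrite eq_c'.
split=> -[uV vV neq_uv no_col]; (split; last split) => //; rewrite ?inE ?uS ?vS //;
  move=> [c [/lift[c' [colc' eq_uv]] cuv]]; apply: no_col; exists c'.
- by split=> //; apply/eqP; rewrite eq_uv cuv.
- by rewrite eq_uv.
Qed.
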